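(* Let $A_1,B_1,B_2,C_1,C_2,C_3\in\mathbb{C}^{r\times r}$ with $C_j+mI$ invertible for all $m\ge0$, $A_1B_i=B_iA_1$ ($i=1,2$), $B_1B_2=B_2B_1$, and $C_iC_j=C_jC_i$ for $i,j\in\{1,2,3\}$. Let $n\ge1$ and suppose $A_1+mI$ is invertible for all $m\ge0$. Then $$F_4[A_1+nI]=F_4+x_1B_1\Big[\sum_{n_1=1}^nF_4[A_1+n_1I,B_1+I,C_1+I]\Big]C_1^{-1}+x_2B_2\Big[\sum_{n_1=1}^nF_4[A_1+n_1I,B_2+I,C_2+I]\Big]C_2^{-1}+x_3B_2\Big[\sum_{n_1=1}^nF_4[A_1+n_1I,B_2+I,C_3+I]\Big]C_3^{-1}.$$ Furthermore, if $A_1-n_1I$ is invertible for $0\le n_1\le n$, then $$F_4[A_1-nI]=F_4-x_1B_1\Big[\sum_{n_1=0}^{n-1}F_4[A_1-n_1I,B_1+I,C_1+I]\Big]C_1^{-1}-x_2B_2\Big[\sum_{n_1=0}^{n-1}F_4[A_1-n_1I,B_2+I,C_2+I]\Big]C_2^{-1}-x_3B_2\Big[\sum_{n_1=0}^{n-1}F_4[A_1-n_1I,B_2+I,C_3+I]\Big]C_3^{-1}.$$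
   Context: For $M\in\mathbb{C}^{r\times r}$: $(M)_0=I$, $(M)_m=M(M+I)\cdots(M+(m-1)I)$, $(M)^{-1}_m=((M)_m)^{-1}$. The three-variable Lauricella matrix function $$F_4=F_4[A_1,B_1,B_2;C_1,C_2,C_3;x_1,x_2,x_3]=\sum_{m_1,m_2,m_3\ge0}(A_1)_{m_1+m_2+m_3}(B_1)_{m_1}(B_2)_{m_2+m_3}(C_1)^{-1}_{m_1}(C_2)^{-1}_{m_2}(C_3)^{-1}_{m_3}\frac{x_1^{m_1}x_2^{m_2}x_3^{m_3}}{m_1!m_2!m_3!},$$ with scalar variables $x_1,x_2,x_3$ and matrix products in the written order; identities are of formal power series in the $x_i$. $F_4[\dots]$ lists only the shifted parameters, all others unchanged. *)

From HB Require Import structures.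
From mathcomp Require Import all_boot all_order all_algebra.
From mathcomp Require Import reals.
From mathcomp.real_closed Require Import complex.
Set Implicit Arguments. Unset Strict Implicit. Unset Printing Implicit Defensive.
Import GRing.Theory Num.Theory.
Local Open Scope ring_scope.

Fixpoint mxpoch {F : fieldType} {r : nat} (M : 'M[F]_r) (m : nat) : 'M[F]_r :=
  match m with
  | 0 => 1%:M
  | k.+1 => mxpoch M k *m (M + k%:R%:M)
  end.

(* Formal power series in x1 x2 x3 with r x r matrix coefficients,
   represented by their coefficient function (m1, m2, m3) |-> coefficient. *)
Definition fps3 (F : fieldType) (r : nat) := nat -> nat -> nat -> 'M[F]_r.

Definition F4 {F : fieldType} {r : nat} (A1 B1 B2 C1 C2 C3 : 'M[F]_r) : fps3 F r :=
  fun m1 m2 m3 =>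
    ((m1`! * m2`! * m3`!)%:R)^-1 *:
    (mxpoch A1 (m1 + m2 + m3) *m mxpoch B1 m1 *m mxpoch B2 (m2 + m3)
      *m invmx (mxpoch C1 m1) *m invmx (mxpoch C2 m2) *m invmx (mxpoch C3 m3)).

(* Multiplication of a series by the variable x1, x2, x3 respectively. *)
Definition xmul1 {F : fieldType} {r : nat} (f : fps3 F r) : fps3 F r :=
  fun m1 m2 m3 => if m1 is k.+1 then f k m2 m3 else 0.
Definition xmul2 {F : fieldType} {r : nat} (f : fps3 F r) : fps3 F r :=
  fun m1 m2 m3 => if m2 is k.+1 then f m1 k m3 else 0.
Definition xmul3 {F : fieldType} {r : nat} (f : fps3 F r) : fps3 F r :=
  fun m1 m2 m3 => if m3 is k.+1 then f m1 m2 k else 0.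

Definition lrmul {F : fieldType} {r : nat} (L : 'M[F]_r) (f : fps3 F r) (R : 'M[F]_r)
  : fps3 F r := fun m1 m2 m3 => L *m f m1 m2 m3 *m R.

(* The heart of the proof is the one-step relation (the case n = 1)
     F_4[A+I] = F_4 + x1 B1 F_4[A+I,B1+I,C1+I] C1^-1
                    + x2 B2 F_4[A+I,B2+I,C2+I] C2^-1 + x3 B2 F_4[A+I,B2+I,C3+I] C3^-1,
   proved coefficientwise.  It rests on the Pochhammer identity
   (A+I)_N - (A)_N = N (A+I)_(N-1): writing N = m1 + m2 + m3, the coefficient
   of x1^m1 x2^m2 x3^m3 in F_4[A+I] - F_4 is (m1 + m2 + m3) times a common
   matrix P(m1,m2,m3) divided by m1! m2! m3!, and the three shifted series
   contribute exactly m1, m2 and m3 times that same quantity, thanks to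
   (B)_(k+1) = B (B+I)_k, (C+I)_k^-1 C^-1 = (C)_(k+1)^-1 and the commutation
   hypotheses.  The theorem then follows by telescoping the one-step relation
   along A1 + kI (upwards) and A1 - kI (downwards) and pushing the finite sums
   through the operations "multiply by x_i" and "multiply by L on the left and
   R on the right". *)

From HB Require Import structures.
From mathcomp Require Import all_boot all_order all_algebra.
From mathcomp Require Import reals.
From mathcomp.real_closed Require Import complex.
From mathcomp Require Import ring.
Set Implicit Arguments. Unset Strict Implicit. Unset Printing Implicit Defensive.
Import GRing.Theory Num.Theory.
Local Open Scope ring_scope.

Lemma telescope_up (V : zmodType) (f d : nat -> V) (n : nat) :
  (forall k, f k.+1 = f k + d k.+1) -> f n = f 0%N + \sum_(1 <= i < n.+1) d i.
Proof.
move=> step; rewrite big_add1 /= (telescope_sumr_eq f) //.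
  by rewrite addrC subrK.
by move=> k _; rewrite step addrC addKr.
Qed.

Lemma telescope_down (V : zmodType) (f d : nat -> V) (n : nat) :
  (forall k, f k = f k.+1 + d k) -> f n = f 0%N - \sum_(0 <= i < n) d i.
Proof.
move=> step; rewrite -sumrN (telescope_sumr_eq f) //.
  by rewrite addrC subrK.
by move=> k _; rewrite [f k]step opprD addNKr.
Qed.

Section MatrixPochhammer.
Variables (F : fieldType) (r : nat).
Implicit Types (M X Y C : 'M[F]_r) (k : nat).

Lemma addn1_mx M k : M + k%:R%:M + 1%:M = M + k.+1%:R%:M.
Proof. by rewrite -addrA -raddfD /= natr1. Qed.

Lemma add1_addn_mx M k : M + 1%:M + k%:R%:M = M + k.+1%:R%:M.
Proof. by rewrite addrAC addn1_mx. Qed.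

Lemma subn1_mx M k : M - k.+1%:R%:M + 1%:M = M - k%:R%:M.
Proof. by rewrite -natr1 raddfD opprD !addrA subrK. Qed.

Lemma comm_add_scalar M X (c : F) :
  M *m X = X *m M -> (M + c%:M) *m X = X *m (M + c%:M).
Proof. by move=> MX; rewrite mulmxDl mulmxDr MX scalar_mxC. Qed.

Lemma comm_sub_scalar M X (c : F) :
  M *m X = X *m M -> (M - c%:M) *m X = X *m (M - c%:M).
Proof. by move=> MX; rewrite mulmxBl mulmxBr MX scalar_mxC. Qed.

Lemma mxpoch_rec M k : mxpoch M k.+1 = mxpoch M k *m (M + k%:R%:M).
Proof. by []. Qed.

Lemma mxpoch_comm X M k : X *m M = M *m X -> X *m mxpoch M k = mxpoch M k *m X.
Proof.
move=> XM; elim: k => [|k IH] /=; first by rewrite mulmx1 mul1mx.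
by rewrite mulmxA IH -!mulmxA mulmxDr mulmxDl XM scalar_mxC.
Qed.

Lemma mxpochS M k : mxpoch M k.+1 = M *m mxpoch (M + 1%:M) k.
Proof.
elim: k => [|k IH]; first by rewrite /= mul1mx mulmx1 raddf0 addr0.
by rewrite mxpoch_rec IH mxpoch_rec -!mulmxA add1_addn_mx.
Qed.

Lemma mxpoch_diff M k :
  mxpoch (M + 1%:M) k.+1 - mxpoch M k.+1 = k.+1%:R *: mxpoch (M + 1%:M) k.
Proof.
have MM1 : M *m (M + 1%:M) = (M + 1%:M) *m M.
  by rewrite mulmxDr mulmxDl mulmx1 mul1mx.
rewrite [mxpoch M _]mxpochS (mxpoch_comm k MM1) mxpoch_rec -mulmxBr.
rewrite -mul_mx_scalar; congr (_ *m _).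
by rewrite add1_addn_mx addrC addKr.
Qed.

Lemma mxpoch_unit C k :
  (forall m : nat, C + m%:R%:M \in unitmx) -> mxpoch C k \in unitmx.
Proof.
move=> uC; elim: k => [|k IH] /=; first exact: unitmx1.
by rewrite unitmx_mul IH uC.
Qed.

Lemma unitmx_shift0 C : (forall m : nat, C + m%:R%:M \in unitmx) -> C \in unitmx.
Proof. by move/(_ 0%N); rewrite raddf0 addr0. Qed.

Lemma invmx_mul X Y : X \in unitmx -> Y \in unitmx ->
  invmx (X *m Y) = invmx Y *m invmx X.
Proof.
move=> uX uY; have uXY : X *m Y \in unitmx by rewrite unitmx_mul uX uY.
rewrite -[RHS](mulKmx uXY) -!mulmxA (mulmxA Y) mulmxV // mul1mx mulmxV //.
by rewrite mulmx1.
Qed.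

Lemma invmx_comm X Y : X \in unitmx -> Y \in unitmx -> X *m Y = Y *m X ->
  invmx X *m invmx Y = invmx Y *m invmx X.
Proof. by move=> uX uY XY; rewrite -invmx_mul // -invmx_mul // XY. Qed.

Lemma invmx_mxpochS C k : (forall m : nat, C + m%:R%:M \in unitmx) ->
  invmx (mxpoch (C + 1%:M) k) *m invmx C = invmx (mxpoch C k.+1).
Proof.
move=> uC; rewrite mxpochS invmx_mul ?(unitmx_shift0 uC) //.
by apply: mxpoch_unit => m; rewrite add1_addn_mx.
Qed.

Lemma invmx_mxpoch_comm C C' k :
  (forall m : nat, C + m%:R%:M \in unitmx) ->
  (forall m : nat, C' + m%:R%:M \in unitmx) -> C *m C' = C' *m C ->
  invmx (mxpoch C' k) *m invmx C = invmx C *m invmx (mxpoch C' k).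
Proof.
move=> uC uC' CC'; apply: invmx_comm; rewrite ?mxpoch_unit ?unitmx_shift0 //.
exact: esym (mxpoch_comm k CC').
Qed.

End MatrixPochhammer.

Lemma natr_fact_neq0 (F : numFieldType) (n : nat) : (n`!)%:R != 0 :> F.
Proof. by rewrite pnatr_eq0 -lt0n fact_gt0. Qed.

Section SeriesSums.
Variables (F : fieldType) (r : nat) (L R : 'M[F]_r) (I : Type) (s : seq I).
Variable f : I -> fps3 F r.

Lemma xmul1_lrmul_sum m1 m2 m3 :
  xmul1 (lrmul L (fun k1 k2 k3 => \sum_(i <- s) f i k1 k2 k3) R) m1 m2 m3
  = \sum_(i <- s) xmul1 (lrmul L (f i) R) m1 m2 m3.
Proof.
by case: m1 => [|k] /=; [rewrite big1 | rewrite /lrmul mulmx_sumr mulmx_suml].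
Qed.

Lemma xmul2_lrmul_sum m1 m2 m3 :
  xmul2 (lrmul L (fun k1 k2 k3 => \sum_(i <- s) f i k1 k2 k3) R) m1 m2 m3
  = \sum_(i <- s) xmul2 (lrmul L (f i) R) m1 m2 m3.
Proof.
by case: m2 => [|k] /=; [rewrite big1 | rewrite /lrmul mulmx_sumr mulmx_suml].
Qed.

Lemma xmul3_lrmul_sum m1 m2 m3 :
  xmul3 (lrmul L (fun k1 k2 k3 => \sum_(i <- s) f i k1 k2 k3) R) m1 m2 m3
  = \sum_(i <- s) xmul3 (lrmul L (f i) R) m1 m2 m3.
Proof.
by case: m3 => [|k] /=; [rewrite big1 | rewrite /lrmul mulmx_sumr mulmx_suml].
Qed.

End SeriesSums.

Definition F4_step_terms (F : fieldType) (r : nat) (A B1 B2 C1 C2 C3 : 'M[F]_r)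
  : fps3 F r := fun m1 m2 m3 =>
  xmul1 (lrmul B1 (F4 A (B1 + 1%:M) B2 (C1 + 1%:M) C2 C3) (invmx C1)) m1 m2 m3
  + xmul2 (lrmul B2 (F4 A B1 (B2 + 1%:M) C1 (C2 + 1%:M) C3) (invmx C2)) m1 m2 m3
  + xmul3 (lrmul B2 (F4 A B1 (B2 + 1%:M) C1 C2 (C3 + 1%:M)) (invmx C3)) m1 m2 m3.

Section OneStepRelation.
Variables (F : numFieldType) (r : nat) (A B1 B2 C1 C2 C3 : 'M[F]_r).
Hypothesis uC1 : forall m : nat, C1 + m%:R%:M \in unitmx.
Hypothesis uC2 : forall m : nat, C2 + m%:R%:M \in unitmx.
Hypothesis uC3 : forall m : nat, C3 + m%:R%:M \in unitmx.
Hypothesis AB1 : A *m B1 = B1 *m A.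
Hypothesis AB2 : A *m B2 = B2 *m A.
Hypothesis B12 : B1 *m B2 = B2 *m B1.
Hypothesis C12 : C1 *m C2 = C2 *m C1.
Hypothesis C13 : C1 *m C3 = C3 *m C1.
Hypothesis C23 : C2 *m C3 = C3 *m C2.

Definition fact3 (m1 m2 m3 : nat) : F := (m1`! * m2`! * m3`!)%:R.

(* The matrix P(m1, m2, m3) shared by all the terms of the relation:
   (A+I)_(N-1) (B1)_m1 (B2)_(m2+m3) (C1)_m1^-1 (C2)_m2^-1 (C3)_m3^-1, N = m1+m2+m3. *)
Definition F4_core (m1 m2 m3 : nat) : 'M[F]_r :=
  mxpoch (A + 1%:M) (m1 + m2 + m3).-1 *m mxpoch B1 m1 *m mxpoch B2 (m2 + m3)
  *m invmx (mxpoch C1 m1) *m invmx (mxpoch C2 m2) *m invmx (mxpoch C3 m3).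

Lemma comm_mxpoch_add1 (B : 'M[F]_r) k : A *m B = B *m A ->
  B *m mxpoch (A + 1%:M) k = mxpoch (A + 1%:M) k *m B.
Proof. by move=> AB; apply: mxpoch_comm; rewrite mulmxDr mulmxDl AB mulmx1 mul1mx. Qed.

Lemma F4_diff m1 m2 m3 :
  F4 (A + 1%:M) B1 B2 C1 C2 C3 m1 m2 m3 - F4 A B1 B2 C1 C2 C3 m1 m2 m3
  = ((m1 + m2 + m3)%:R / fact3 m1 m2 m3) *: F4_core m1 m2 m3.
Proof.
rewrite /F4 /F4_core /fact3 -scalerBr -!mulmxA -mulmxBl.
case: (m1 + m2 + m3)%N => [|N]; first by rewrite subrr mul0mx scaler0 mul0r scale0r.
by rewrite mxpoch_diff succnK -scalemxAl scalerA mulrC.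
Qed.

Lemma F4_x1_term m1 m2 m3 :
  xmul1 (lrmul B1 (F4 (A + 1%:M) (B1 + 1%:M) B2 (C1 + 1%:M) C2 C3) (invmx C1)) m1 m2 m3
  = (m1%:R / fact3 m1 m2 m3) *: F4_core m1 m2 m3.
Proof.
case: m1 => [|k]; first by rewrite mul0r scale0r.
rewrite /= /lrmul /F4 /F4_core /fact3 -scalemxAr -!scalemxAl !addSn succnK.
congr (_ *: _).
  rewrite factS !natrM; field.
  by rewrite !natr_fact_neq0 [1 + _]addrC natr1 pnatr_eq0.
rewrite (mxpochS B1 k) -(invmx_mxpochS k uC1) !mulmxA (comm_mxpoch_add1 _ AB1).
rewrite -!mulmxA.
rewrite (invmx_mxpoch_comm _ uC1 uC3 C13) (mulmxA (invmx (mxpoch C2 m2))).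
by rewrite (invmx_mxpoch_comm _ uC1 uC2 C12) -mulmxA.
Qed.

Lemma F4_x2_term m1 m2 m3 :
  xmul2 (lrmul B2 (F4 (A + 1%:M) B1 (B2 + 1%:M) C1 (C2 + 1%:M) C3) (invmx C2)) m1 m2 m3
  = (m2%:R / fact3 m1 m2 m3) *: F4_core m1 m2 m3.
Proof.
case: m2 => [|k]; first by rewrite mul0r scale0r.
rewrite /= /lrmul /F4 /F4_core /fact3 -scalemxAr -!scalemxAl !addnS !addSn succnK.
congr (_ *: _).
  rewrite factS !natrM; field.
  by rewrite !natr_fact_neq0 [1 + _]addrC natr1 pnatr_eq0.
rewrite (mxpochS B2 (k + m3)) -(invmx_mxpochS k uC2) !mulmxA (comm_mxpoch_add1 _ AB2).
rewrite -(mulmxA _ B2 (mxpoch B1 m1)) (mxpoch_comm m1 (esym B12)) !mulmxA -!mulmxA.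
by rewrite (invmx_mxpoch_comm _ uC2 uC3 C23).
Qed.

Lemma F4_x3_term m1 m2 m3 :
  xmul3 (lrmul B2 (F4 (A + 1%:M) B1 (B2 + 1%:M) C1 C2 (C3 + 1%:M)) (invmx C3)) m1 m2 m3
  = (m3%:R / fact3 m1 m2 m3) *: F4_core m1 m2 m3.
Proof.
case: m3 => [|k]; first by rewrite mul0r scale0r.
rewrite /= /lrmul /F4 /F4_core /fact3 -scalemxAr -!scalemxAl !addnS succnK.
congr (_ *: _).
  rewrite factS !natrM; field.
  by rewrite !natr_fact_neq0 [1 + _]addrC natr1 pnatr_eq0.
rewrite (mxpochS B2 (m2 + k)) -(invmx_mxpochS k uC3) !mulmxA (comm_mxpoch_add1 _ AB2).
by rewrite -(mulmxA _ B2 (mxpoch B1 m1)) (mxpoch_comm m1 (esym B12)) !mulmxA.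
Qed.

Lemma F4_contiguous m1 m2 m3 :
  F4 (A + 1%:M) B1 B2 C1 C2 C3 m1 m2 m3 =
  F4 A B1 B2 C1 C2 C3 m1 m2 m3 + F4_step_terms (A + 1%:M) B1 B2 C1 C2 C3 m1 m2 m3.
Proof.
rewrite /F4_step_terms F4_x1_term F4_x2_term F4_x3_term -!addrA.
rewrite -!scalerDl -!mulrDl -!natrD addnA.
by rewrite -F4_diff [RHS]addrC subrK.
Qed.

End OneStepRelation.

Section IteratedRelation.
Variables (F : numFieldType) (r : nat) (A B1 B2 C1 C2 C3 : 'M[F]_r).
Hypothesis uC1 : forall m : nat, C1 + m%:R%:M \in unitmx.
Hypothesis uC2 : forall m : nat, C2 + m%:R%:M \in unitmx.
Hypothesis uC3 : forall m : nat, C3 + m%:R%:M \in unitmx.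
Hypothesis AB1 : A *m B1 = B1 *m A.
Hypothesis AB2 : A *m B2 = B2 *m A.
Hypothesis B12 : B1 *m B2 = B2 *m B1.
Hypothesis C12 : C1 *m C2 = C2 *m C1.
Hypothesis C13 : C1 *m C3 = C3 *m C1.
Hypothesis C23 : C2 *m C3 = C3 *m C2.

Lemma F4_iterate_up n m1 m2 m3 :
  F4 (A + n%:R%:M) B1 B2 C1 C2 C3 m1 m2 m3 = F4 A B1 B2 C1 C2 C3 m1 m2 m3
  + \sum_(1 <= i < n.+1) F4_step_terms (A + i%:R%:M) B1 B2 C1 C2 C3 m1 m2 m3.
Proof.
have := telescope_up (f := fun k => F4 (A + k%:R%:M) B1 B2 C1 C2 C3 m1 m2 m3)
  (d := fun i => F4_step_terms (A + i%:R%:M) B1 B2 C1 C2 C3 m1 m2 m3) n.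
rewrite /= raddf0 addr0; apply=> k; rewrite -addn1_mx.
by apply: F4_contiguous; rewrite ?comm_add_scalar.
Qed.

Lemma F4_iterate_down n m1 m2 m3 :
  F4 (A - n%:R%:M) B1 B2 C1 C2 C3 m1 m2 m3 = F4 A B1 B2 C1 C2 C3 m1 m2 m3
  - \sum_(0 <= i < n) F4_step_terms (A - i%:R%:M) B1 B2 C1 C2 C3 m1 m2 m3.
Proof.
have := telescope_down (f := fun k => F4 (A - k%:R%:M) B1 B2 C1 C2 C3 m1 m2 m3)
  (d := fun i => F4_step_terms (A - i%:R%:M) B1 B2 C1 C2 C3 m1 m2 m3) n.
rewrite /= raddf0 subr0; apply=> k; rewrite -subn1_mx.
by apply: F4_contiguous; rewrite ?comm_sub_scalar.
Qed.

End IteratedRelation.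

Theorem mainTheorem16 (R : realType) (r : nat)
  (A1 B1 B2 C1 C2 C3 : 'M[R[i]]_r)
  (hC1 : forall m : nat, C1 + m%:R%:M \in unitmx)
  (hC2 : forall m : nat, C2 + m%:R%:M \in unitmx)
  (hC3 : forall m : nat, C3 + m%:R%:M \in unitmx)
  (hAB1 : A1 *m B1 = B1 *m A1) (hAB2 : A1 *m B2 = B2 *m A1)
  (hB12 : B1 *m B2 = B2 *m B1)
  (hC12 : C1 *m C2 = C2 *m C1) (hC13 : C1 *m C3 = C3 *m C1)
  (hC23 : C2 *m C3 = C3 *m C2)
  (n : nat) (hn : (1 <= n)%N)
  (hA : forall m : nat, A1 + m%:R%:M \in unitmx) :
  (forall m1 m2 m3 : nat,
     F4 (A1 + n%:R%:M) B1 B2 C1 C2 C3 m1 m2 m3 =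
       F4 A1 B1 B2 C1 C2 C3 m1 m2 m3
     + xmul1 (lrmul B1 (fun k1 k2 k3 => \sum_(1 <= n1 < n.+1)
           F4 (A1 + n1%:R%:M) (B1 + 1%:M) B2 (C1 + 1%:M) C2 C3 k1 k2 k3)
           (invmx C1)) m1 m2 m3
     + xmul2 (lrmul B2 (fun k1 k2 k3 => \sum_(1 <= n1 < n.+1)
           F4 (A1 + n1%:R%:M) B1 (B2 + 1%:M) C1 (C2 + 1%:M) C3 k1 k2 k3)
           (invmx C2)) m1 m2 m3
     + xmul3 (lrmul B2 (fun k1 k2 k3 => \sum_(1 <= n1 < n.+1)
           F4 (A1 + n1%:R%:M) B1 (B2 + 1%:M) C1 C2 (C3 + 1%:M) k1 k2 k3)
           (invmx C3)) m1 m2 m3)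
  /\
  ((forall n1 : nat, (n1 <= n)%N -> A1 - n1%:R%:M \in unitmx) ->
   forall m1 m2 m3 : nat,
     F4 (A1 - n%:R%:M) B1 B2 C1 C2 C3 m1 m2 m3 =
       F4 A1 B1 B2 C1 C2 C3 m1 m2 m3
     - xmul1 (lrmul B1 (fun k1 k2 k3 => \sum_(0 <= n1 < n)
           F4 (A1 - n1%:R%:M) (B1 + 1%:M) B2 (C1 + 1%:M) C2 C3 k1 k2 k3)
           (invmx C1)) m1 m2 m3
     - xmul2 (lrmul B2 (fun k1 k2 k3 => \sum_(0 <= n1 < n)
           F4 (A1 - n1%:R%:M) B1 (B2 + 1%:M) C1 (C2 + 1%:M) C3 k1 k2 k3)
           (invmx C2)) m1 m2 m3
     - xmul3 (lrmul B2 (fun k1 k2 k3 => \sum_(0 <= n1 < n)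
           F4 (A1 - n1%:R%:M) B1 (B2 + 1%:M) C1 C2 (C3 + 1%:M) k1 k2 k3)
           (invmx C3)) m1 m2 m3).
Proof.
have up := F4_iterate_up hC1 hC2 hC3 hAB1 hAB2 hB12 hC12 hC13 hC23.
have down := F4_iterate_down hC1 hC2 hC3 hAB1 hAB2 hB12 hC12 hC13 hC23.
split=> [|_] m1 m2 m3;
  rewrite xmul1_lrmul_sum xmul2_lrmul_sum xmul3_lrmul_sum.
- rewrite up -!addrA; congr (_ + _).
  by rewrite /F4_step_terms !big_split /= -addrA.
- rewrite down -!addrA -!opprD; congr (_ - _).
  by rewrite /F4_step_terms !big_split /= -addrA.
Qed.
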